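(* Let $A_0,A_1,\dots,A_n$ be the distance matrices of the hypercube $Q_n$ (real $2^n\times 2^n$ matrices). (i) If $n$ is odd, then $\ker(A_0+A_1)\subseteq\ker(A_{2i}+A_{2i+1})$ for all $i=0,1,\dots,\frac{n-1}{2}$. (ii) If $n\equiv 1\pmod 4$, then $\ker(A_0+A_1)\subseteq\ker(A_i+A_{n-i})$ for all $i=0,1,\dots,\frac{n-1}{2}$.
   Context: $Q_n$ is the hypercube with vertex set $\mathbb{F}_2^n$, two vertices adjacent iff they differ in exactly one coordinate. For $0\le i\le n$, the $i$-distance matrix $A_i$ is the matrix indexed by vertices with $(A_i)_{xy}=1$ if $d(x,y)=i$ and $0$ otherwise; $A_0=I$ and $A_1$ is the adjacency matrix. *)

From Stdlib Require Import Reals.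
From mathcomp Require Import all_boot all_order all_algebra.
From mathcomp Require Import Rstruct.
Set Implicit Arguments. Unset Strict Implicit. Unset Printing Implicit Defensive.
Import GRing.Theory.
Local Open Scope ring_scope.

Definition hvert (n : nat) := {ffun 'I_n -> bool}.

(* Hamming distance = graph distance in Q_n. *)
Definition hdist (n : nat) (x y : hvert n) : nat := #|[set k | x k != y k]|.

Definition distmx (n i : nat) : 'M[R]_(#|{: hvert n}|) :=
  \matrix_(a, b) (if hdist (enum_val a) (enum_val b) == i then 1 else 0).

Definition in_ker (N : nat) (M : 'M[R]_N) (v : 'cV[R]_N) : Prop := M *m v = 0.

(* Fix a vector f in the kernel of A_0 + A_1, i.e. f(y) + sum_{y' ~ y} f(y') = 0 for
   every vertex y, and a vertex x, and let S_k = sum_{d(x,y) = k} f(y).  Summing the kernel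
   equation over the sphere of radius k+1 around x, every vertex at distance k (resp. k+2)
   from x is counted n-k (resp. k+2) times, so
     S_{k+1} + (n-k) S_k + (k+2) S_{k+2} = 0,   S_0 = f(x),  S_1 = -f(x).
   For n = 2h+1 this recurrence is solved by S_{2j} = (-1)^j C(h,j) f(x) = -S_{2j+1}.
   Hence S_{2i} + S_{2i+1} = 0, which is (i); when h is even, C(h,j) = C(h,h-j) with the
   same sign, and S_i + S_{n-i} = 0 because i and n-i have opposite parities, which is (ii). *)

From Stdlib Require Import Reals.
From mathcomp Require Import all_boot all_order all_algebra.
From mathcomp Require Import Rstruct.
From mathcomp Require Import zify ring.
Set Implicit Arguments. Unset Strict Implicit. Unset Printing Implicit Defensive.
Import GRing.Theory Num.Theory.
Local Open Scope ring_scope.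

Section Flip.
Variable n : nat.
Implicit Types (x y w : hvert n) (l : 'I_n).

Definition flip l w : hvert n := [ffun k => if k == l then ~~ w k else w k].

Lemma flipK l : involutive (flip l).
Proof. by move=> w; apply/ffunP=> k; rewrite !ffunE; case: eqP; rewrite ?negbK. Qed.

Lemma flip_injl w : injective (flip^~ w).
Proof.
move=> l l' /ffunP/(_ l); rewrite !ffunE eqxx.
by case: eqP => [->|_] //; case: (w l).
Qed.

Lemma hdist_eq0 x y : (hdist x y == 0%N) = (x == y).
Proof.
rewrite cards_eq0; apply/eqP/eqP => [/setP xy | ->].
  by apply/ffunP=> k; have := xy k; rewrite !inE => /negbFE/eqP.
by apply/setP=> k; rewrite !inE eqxx.
Qed.

Lemma card_agree x w : #|[set l | x l == w l]| = (n - hdist x w)%N.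
Proof.
have := cardsC [set l | x l != w l]; rewrite card_ord.
have -> : ~: [set l | x l != w l] = [set l | x l == w l].
  by apply/setP=> l; rewrite !inE negbK.
rewrite /hdist; lia.
Qed.

Lemma hdist_flip x w l :
  hdist x (flip l w) = if x l == w l then (hdist x w).+1 else (hdist x w).-1.
Proof.
have flip_ne k :
    (x k != flip l w k) = if k == l then x l == w l else x k != w k.
  by rewrite ffunE; case: (k =P l) => [->|]; case: (x l); case: (w l).
rewrite /hdist; case: ifP => xwl.
  have := cardsU1 l [set k | x k != w k]; rewrite inE xwl /= add1n => <-.
  apply: eq_card => k.
  by rewrite !inE flip_ne; case: (k =P l) => [->|].
rewrite (cardsD1 l [set k | x k != w k]) inE xwl /=; apply: eq_card => k.
by rewrite !inE flip_ne; case: (k =P l) => [->|].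
Qed.

Lemma hdist_eq1 y w : (hdist y w == 1%N) = (w \in [set flip l y | l : 'I_n]).
Proof.
rewrite /hdist; apply/cards1P/idP => [[l /setP yw] | /imsetP[l _ ->]].
  suff -> : w = flip l y by apply: imset_f.
  apply/ffunP=> k; have := yw k; rewrite !inE ffunE.
  by case: (k =P l) => _; case: (y k); case: (w k).
exists l; apply/setP=> k; rewrite !inE ffunE.
by case: (k =P l) => _; case: (y k).
Qed.

End Flip.

Section SphereSum.
Variables (V : nmodType) (n : nat).
Implicit Types (f : hvert n -> V) (x y w : hvert n).

Definition sphere_sum f x k : V := \sum_(y | hdist x y == k) f y.

Lemma sphere_sum0 f x : sphere_sum f x 0 = f x.
Proof.
rewrite /sphere_sum (eq_bigl (pred1 x)) ?big_pred1_eq // => y.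
by rewrite hdist_eq0 eq_sym.
Qed.

Lemma sphere_sum1 f x : sphere_sum f x 1 = \sum_l f (flip l x).
Proof.
rewrite /sphere_sum (eq_bigl (mem [set flip l x | l : 'I_n])); last first.
  by move=> w; rewrite hdist_eq1.
by rewrite big_imset //= => l l' _ _ /flip_injl.
Qed.

Lemma card_flip_hdist x w k :
  #|[set l | hdist x (flip l w) == k.+1]| =
  (if hdist x w == k then n - k else if hdist x w == k.+2 then k.+2 else 0)%N.
Proof.
set d := hdist x w.
have -> : [set l | hdist x (flip l w) == k.+1] =
          [set l | if x l == w l then d == k else d == k.+2].
  by apply/setP=> l; rewrite !inE hdist_flip -/d; case: (x l == w l); last case: (d).
case: (d =P k) => [d_k | _].
  rewrite -d_k -card_agree; apply: eq_card => l; rewrite !inE.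
  by case: (x l == w l); rewrite ?ltn_eqF.
case: (d =P k.+2) => [<- | _]; first by apply: eq_card => l; rewrite !inE.
by apply: eq_card0 => l; rewrite !inE; case: ifP.
Qed.

Lemma sum_sphere_flips f x k :
  \sum_(y | hdist x y == k.+1) \sum_l f (flip l y) =
  sphere_sum f x k *+ (n - k) + sphere_sum f x k.+2 *+ k.+2.
Proof.
(* Double counting: after the substitution y = flip l w, each w is counted once for
   every l with d(x, flip l w) = k+1. *)
rewrite exchange_big /=.
under eq_bigr => l _ do rewrite (reindex_inj (inv_inj (flipK l))) /=.
under eq_bigr => l _ do under eq_bigr => w _ do rewrite flipK.
rewrite (exchange_big_dep xpredT) //=.
under eq_bigr => w _ do rewrite sumr_const -cardsE card_flip_hdist.
rewrite /sphere_sum !(big_mkcond (fun y => hdist x y == _)) -!sumrMnl -big_split /=.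
apply: eq_bigr => w _; case: (hdist x w =P k) => [-> | _].
  by rewrite ltn_eqF ?mul0rn ?addr0.
by case: (hdist x w =P k.+2) => _; rewrite ?mul0rn ?add0r.
Qed.

End SphereSum.

Definition sphere_recurrence (V : nmodType) (n : nat) (u : nat -> V) :=
  forall k, u k.+1 + u k *+ (n - k) + u k.+2 *+ k.+2 = 0.

Lemma sphere_sum_rec (V : nmodType) n (f : hvert n -> V) :
  (forall y, sphere_sum f y 0 + sphere_sum f y 1 = 0) ->
  forall x, sphere_recurrence n (sphere_sum f x).
Proof.
move=> ker_f x k; rewrite -addrA -sum_sphere_flips /sphere_sum -big_split /=.
by apply: big1 => y _; rewrite -sphere_sum1 -[f y]sphere_sum0 ker_f.
Qed.

Section SphereCoef.
Variable F : numFieldType.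
Implicit Types u v : nat -> F.

Lemma sphere_recurrenceMr n u a :
  sphere_recurrence n u -> sphere_recurrence n (fun k => u k * a).
Proof. by move=> rec_u k; rewrite -!mulrnAl -!mulrDl rec_u mul0r. Qed.

Lemma sphere_recurrence_uniq n u v :
  u 0 = v 0 -> u 1 = v 1 -> sphere_recurrence n u -> sphere_recurrence n v -> u =1 v.
Proof.
move=> uv0 uv1 rec_u rec_v.
suff uv k : u k = v k /\ u k.+1 = v k.+1 by move=> k; case: (uv k).
elim: k => [|k [uv_k uv_k1]]; first by [].
split=> //; apply/eqP.
have last_term (w : nat -> F) :
    sphere_recurrence n w -> w k.+2 *+ k.+2 = - (w k.+1 + w k *+ (n - k)).
  by move=> /(_ k) /eqP; rewrite addrC addr_eq0 => /eqP.
have := last_term u rec_u; rewrite uv_k uv_k1 -(last_term v rec_v) => /eqP.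
by rewrite -subr_eq0 -mulrnBl mulrn_eq0 subr_eq0.
Qed.

Definition signed_binom h j : F := (-1) ^+ j * 'C(h, j)%:R.

Lemma signed_binomS h j : signed_binom h j.+1 *+ j.+1 = - (signed_binom h j *+ (h - j)).
Proof.
rewrite /signed_binom exprS mulN1r mulNr mulNrn -!mulrnAr -!mulrnA.
by rewrite mulnC mul_bin_left mulnC.
Qed.

Lemma signed_binom_sub h j : ~~ odd h -> (j <= h)%N -> signed_binom h (h - j) = signed_binom h j.
Proof.
move=> even_h le_jh; rewrite /signed_binom bin_sub //.
by rewrite -signr_odd oddB // (negbTE even_h) signr_odd.
Qed.

Definition sphere_coef h k : F :=
  if odd k then - signed_binom h k./2 else signed_binom h k./2.

Lemma sphere_coef_double h j : sphere_coef h j.*2 = signed_binom h j.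
Proof. by rewrite /sphere_coef odd_double half_double. Qed.

Lemma sphere_coef_doubleS h j : sphere_coef h j.*2.+1 = - signed_binom h j.
Proof. by rewrite /sphere_coef /= odd_double uphalf_double. Qed.

Lemma sphere_coef_rec h : sphere_recurrence h.*2.+1 (sphere_coef h).
Proof.
move=> k; rewrite -[k]odd_double_half; case: (odd k); move: k./2 => j.
  rewrite add1n -doubleS sphere_coef_double !sphere_coef_doubleS.
  have -> : (h.*2.+1 - j.*2.+1 = (h - j) * 2)%N by lia.
  have -> : (j.+1.*2.+1 = j.+1 * 2 + 1)%N by lia.
  rewrite mulrnDr !mulrnA ?mulNrn signed_binomS.
  ring.
rewrite add0n -doubleS sphere_coef_double sphere_coef_doubleS sphere_coef_double.
case: (leqP j h) => [le_jh | lt_hj].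
  have -> : (h.*2.+1 - j.*2 = (h - j) * 2 + 1)%N by lia.
  have -> : (j.+1.*2 = j.+1 * 2)%N by lia.
  rewrite mulrnDr !mulrnA ?mulNrn signed_binomS.
  ring.
by rewrite /signed_binom !bin_small ?mulr0 ?mul0rn ?oppr0 ?addr0 // ltnW.
Qed.

Lemma sphere_coef_pair h i : sphere_coef h (2 * i) + sphere_coef h (2 * i + 1) = 0.
Proof. by rewrite mul2n addn1 sphere_coef_double sphere_coef_doubleS addrN. Qed.

Lemma sphere_coef_compl h i : ~~ odd h -> (i <= h.*2.+1)%N ->
  sphere_coef h i + sphere_coef h (h.*2.+1 - i) = 0.
Proof.
move=> even_h; rewrite -[i]odd_double_half; case: (odd i); move: i./2 => j le_j.
  have -> : (h.*2.+1 - (true + j.*2) = (h - j).*2)%N by lia.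
  by rewrite add1n sphere_coef_doubleS sphere_coef_double signed_binom_sub ?addNr //; lia.
have -> : (h.*2.+1 - (false + j.*2) = (h - j).*2.+1)%N by lia.
by rewrite add0n sphere_coef_double sphere_coef_doubleS signed_binom_sub ?addrN //; lia.
Qed.

Lemma kernel_sphere_sum h (f : hvert h.*2.+1 -> F) :
  (forall y, sphere_sum f y 0 + sphere_sum f y 1 = 0) ->
  forall x k, sphere_sum f x k = sphere_coef h k * f x.
Proof.
move=> ker_f x; apply: sphere_recurrence_uniq (sphere_sum_rec ker_f x)
  (sphere_recurrenceMr _ (sphere_coef_rec h)).
  by rewrite sphere_sum0 (sphere_coef_double h 0) /signed_binom expr0 bin0 !mul1r.
have := ker_f x; rewrite sphere_sum0 addrC => /eqP; rewrite addr_eq0 => /eqP ->.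
by rewrite (sphere_coef_doubleS h 0) /signed_binom expr0 bin0 mul1r mulN1r.
Qed.

End SphereCoef.

Definition vertex_fun n (v : 'cV[R]_#|{: hvert n}|) (x : hvert n) : R := v (enum_rank x) 0.

Lemma distmx_mulE n i v x :
  (distmx n i *m v) (enum_rank x) 0 = sphere_sum (@vertex_fun n v) x i.
Proof.
rewrite mxE (reindex (@enum_rank _)) /=; last by apply: onW_bij; exact: enum_rank_bij.
rewrite /sphere_sum [RHS]big_mkcond; apply: eq_bigr => y _; rewrite !mxE !enum_rankK.
by case: ifP; rewrite ?mul1r ?mul0r.
Qed.

Lemma in_ker_distmxD n i j v :
  in_ker (distmx n i + distmx n j) v <->
  forall x, sphere_sum (@vertex_fun n v) x i + sphere_sum (@vertex_fun n v) x j = 0.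
Proof.
have mulE x : ((distmx n i + distmx n j) *m v) (enum_rank x) 0 =
    sphere_sum (vertex_fun v) x i + sphere_sum (vertex_fun v) x j.
  by rewrite mulmxDl mxE !distmx_mulE.
split=> [/matrixP ker_v x | ker_v]; first by have := ker_v (enum_rank x) 0; rewrite mulE mxE.
by apply/matrixP => a b; rewrite (ord1 b) -(enum_valK a) mulE ker_v mxE.
Qed.

Theorem lemma3p8 (n : nat) :
  (odd n ->
     forall i : nat, (i <= (n - 1) %/ 2)%N ->
     forall v : 'cV[R]_(#|{: hvert n}|),
       in_ker (distmx n 0 + distmx n 1) v ->
       in_ker (distmx n (2 * i)%N + distmx n (2 * i + 1)%N) v) /\
  ((n %% 4 = 1)%N ->
     forall i : nat, (i <= (n - 1) %/ 2)%N ->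
     forall v : 'cV[R]_(#|{: hvert n}|),
       in_ker (distmx n 0 + distmx n 1) v ->
       in_ker (distmx n i + distmx n (n - i)%N) v).
Proof.
have [[h ->] | even_n] : (exists h, n = h.*2.+1) \/ ~~ odd n;
    last by split=> ?; exfalso; lia.
  by case/boolP: (odd n) => odd_n; [left; exists n./2; lia | right].
have ker_coef v : in_ker (distmx h.*2.+1 0 + distmx h.*2.+1 1) v ->
    forall x k, sphere_sum (vertex_fun v) x k = sphere_coef R h k * vertex_fun v x.
  by move/in_ker_distmxD; apply: kernel_sphere_sum.
split=> [_ i _ v /ker_coef coef_v | n4 i le_i v /ker_coef coef_v];
  apply/in_ker_distmxD => x; rewrite !coef_v -mulrDl.
  by rewrite sphere_coef_pair mul0r.
by rewrite sphere_coef_compl ?mul0r //; lia.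
Qed.
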